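(* Let $A$ be a distributive meet-complemented lattice in which $\Box x$ and $\Diamond x$ exist for every $x\in A$ and such that $\Box a\le\Box\Box a$ for all $a\in A$. Then for every $a\in A$: (i) $\Diamond\neg\Box a=\neg\Box a$; (ii) $\neg\neg\Diamond a\le\Diamond a$; (iii) $\neg\Box\neg a\le\Diamond a$; (iv) $\Diamond a=\neg\Box\neg a$.
   Context: A meet-complemented lattice is a lattice $(L,\le)$ such that for every $a\in L$ the element $\neg a=\max\{b\in L: a\wedge b\le c\ \text{for all } c\in L\}$ exists; it is bounded with bottom $0$ and top $1$. For $a\in L$, $\Box a=\max\{b\in L: a\vee\neg b=1\}$ and $\Diamond a=\min\{b\in L: \neg a\vee b=1\}$. *)

From HB Require Import structures.
From mathcomp Require Import all_boot all_order.
Set Implicit Arguments. Unset Strict Implicit. Unset Printing Implicit Defensive.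
Import Order.TTheory.
Local Open Scope order_scope.

Definition is_max (d : Order.disp_t) (T : porderType d) (P : T -> Prop) (m : T) : Prop :=
  P m /\ forall b, P b -> b <= m.

Definition is_min (d : Order.disp_t) (T : porderType d) (P : T -> Prop) (m : T) : Prop :=
  P m /\ forall b, P b -> m <= b.

(* The meet-complement neg is antitone with x <= neg (neg x), and in a
   distributive lattice [z `&` u = \bot] and [u `|` v = \top] force [z <= v].
   From the extremal definitions one gets [box a <= a] and
   [a `|` neg (box a) = \top]; with [box a <= box (box a)] also
   [box a `|` neg (box a) = \top].  Hence [dia a] is a fixed point of [box],
   so it satisfies excluded middle, which gives (ii), and squeezing [dia a]
   against [neg (box (neg a))] gives (iii) and (iv).  Item (i) holds because
   [neg (box a)] itself satisfies [neg x `|` x = \top]. *)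

From HB Require Import structures.
From mathcomp Require Import all_boot all_order.
Import Order.TTheory.
Local Open Scope order_scope.

Section MeetComplemented.
Context {d : Order.disp_t} {A : tbDistrLatticeType d}.

Lemma meet_eq0_join_eq1_le (z u v : A) : z `&` u = \bot -> u `|` v = \top -> z <= v.
Proof.
move=> zu uv.
have -> : z = z `&` (u `|` v) by rewrite uv meetx1.
by rewrite meetUr zu join0x leIr.
Qed.

Context {neg : A -> A}.
Hypothesis negP : forall a : A, is_max (fun b : A => forall c : A, a `&` b <= c) (neg a).

Lemma meetxN (x : A) : x `&` neg x = \bot.
Proof. by apply/eqP; rewrite eq_le le0x andbT; apply: (proj1 (negP x)). Qed.

Lemma meet_eq0_le_neg (x b : A) : x `&` b = \bot -> b <= neg x.
Proof. by move=> h; apply: (proj2 (negP x)) => c; rewrite h le0x. Qed.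

Lemma le_negN (x : A) : x <= neg (neg x).
Proof. by apply: meet_eq0_le_neg; rewrite meetC meetxN. Qed.

Lemma le_neg (x y : A) : x <= y -> neg y <= neg x.
Proof.
move=> xy; apply: meet_eq0_le_neg; apply/eqP; rewrite eq_le le0x andbT.
by rewrite -(meetxN y) leI2.
Qed.

Lemma negN_le (x : A) : x `|` neg x = \top -> neg (neg x) <= x.
Proof.
move=> h; apply: (meet_eq0_join_eq1_le _ (neg x)); first by rewrite meetC meetxN.
by rewrite joinC.
Qed.

Section Box.
Context {box : A -> A}.
Hypothesis boxP : forall a : A, is_max (fun b : A => a `|` neg b = \top) (box a).

Lemma le_box (a b : A) : a `|` neg b = \top -> b <= box a.
Proof. exact: (proj2 (boxP a)). Qed.

Lemma joinxNbox (a : A) : a `|` neg (box a) = \top.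
Proof. exact: (proj1 (boxP a)). Qed.

Lemma box_le (a : A) : box a <= a.
Proof.
apply: (meet_eq0_join_eq1_le _ (neg (box a))); first exact: meetxN.
by rewrite joinC joinxNbox.
Qed.

Hypothesis box_le_boxbox : forall a : A, box a <= box (box a).

Lemma join_boxN (a : A) : box a `|` neg (box a) = \top.
Proof.
apply/eqP; rewrite -le1x -(joinxNbox (box a)).
by apply: leU2 => //; apply: le_neg.
Qed.

Section Diamond.
Context {dia : A -> A}.
Hypothesis diaP : forall a : A, is_min (fun b : A => neg a `|` b = \top) (dia a).

Lemma dia_le (a b : A) : neg a `|` b = \top -> dia a <= b.
Proof. exact: (proj2 (diaP a)). Qed.

Lemma joinNdia (a : A) : neg a `|` dia a = \top.
Proof. exact: (proj1 (diaP a)). Qed.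

Lemma dia_id (x : A) : neg x `|` x = \top -> dia x = x.
Proof.
move=> Nx; apply/le_anti; rewrite dia_le //=.
by apply: (meet_eq0_join_eq1_le _ (neg x)); rewrite ?meetxN ?joinNdia.
Qed.

Lemma box_dia (a : A) : box (dia a) = dia a.
Proof.
apply/le_anti; rewrite box_le /= dia_le //.
apply/eqP; rewrite -le1x -(join_boxN (dia a)) joinC.
by apply: leU2 => //; apply: le_neg; apply: le_box; rewrite joinC joinNdia.
Qed.

Lemma join_diaN (a : A) : dia a `|` neg (dia a) = \top.
Proof. by rewrite -box_dia join_boxN. Qed.

Lemma dia_negN_box (a : A) : dia a = neg (box (neg a)).
Proof.
apply/le_anti; rewrite dia_le ?joinxNbox //=.
apply: (le_trans _ (negN_le _ (join_diaN a))); apply: le_neg; apply: le_box.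
apply/eqP; rewrite -le1x -(joinNdia a).
by apply: leU2 => //; exact: le_negN.
Qed.

Lemma dia_negbox (a : A) : dia (neg (box a)) = neg (box a).
Proof.
apply: dia_id; apply/eqP; rewrite -le1x -(join_boxN a).
by apply: leU2 => //; exact: le_negN.
Qed.

End Diamond.
End Box.
End MeetComplemented.

Theorem proposition23 (d : Order.disp_t) (A : tbDistrLatticeType d)
  (neg box dia : A -> A)
  (Hneg : forall a : A, is_max (fun b : A => forall c : A, a `&` b <= c) (neg a))
  (Hbox : forall a : A, is_max (fun b : A => a `|` neg b = \top) (box a))
  (Hdia : forall a : A, is_min (fun b : A => neg a `|` b = \top) (dia a))
  (H4 : forall a : A, box a <= box (box a)) :
  forall a : A,
    [/\ dia (neg (box a)) = neg (box a),
        neg (neg (dia a)) <= dia a,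
        neg (box (neg a)) <= dia a &
        dia a = neg (box (neg a))].
Proof.
move=> a; have diaE := dia_negN_box Hneg Hbox H4 Hdia a.
split.
- exact: (dia_negbox Hneg Hbox H4 Hdia).
- exact: (negN_le Hneg _ (join_diaN Hneg Hbox H4 Hdia a)).
- by rewrite diaE.
- exact: diaE.
Qed.
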